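(* Let $v_1,v_2$ be two adjacent vertices of $\mathscr{BG}_+(n)$ with associated collections $\mathscr{D}_1,\mathscr{D}_2$ such that $\bigcap\mathscr{D}_1=\{i\}$ and $\bigcap\mathscr{D}_2=\{j\}$. Let $v=\lambda v_1+(1-\lambda)v_2$ with $\lambda\in\,]0,1[$. Then: (1) if $i=j$, the core $C(v)$ is a singleton; (2) if $i\neq j$ and $n\leqslant 4$, the core $C(v)$ is a singleton.
   Context: $N=\{1,\ldots,n\}$; a game is a map $v:2^N\to\mathbb{R}$ with $v(\varnothing)=0$. The core is $C(v)=\{x\in\mathbb{R}^N:\sum_{i\in S}x_i\geqslant v(S)\ \forall S,\ \sum_{i\in N}x_i=v(N)\}$. $\mathscr{BG}_+(n)$ is the polytope (in $\mathbb{R}^{2^N\setminus\{\varnothing,N\}}$) of games with $v\geqslant0$, $v(N)=1$ and $C(v)\neq\varnothing$. The collection associated to a vertex $v$ is $\mathscr{D}=\{S:\varnothing\neq S\subsetneq N,\ v(S)=1\}$; $\bigcap\mathscr{D}$ is the intersection of its members. Two vertices are adjacent if they lie on a common edge of the polytope. *)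

From HB Require Import structures.
From mathcomp Require Import all_boot all_order all_algebra.
From mathcomp Require Import reals.
Set Implicit Arguments. Unset Strict Implicit. Unset Printing Implicit Defensive.
Import Order.TTheory GRing.Theory Num.Theory.
Local Open Scope ring_scope.

(* Player set N = 'I_n ; coalitions are {set 'I_n}.
   A game is a finite function v : {ffun {set 'I_n} -> R} (v set0 = 0 is
   part of membership in the polytope below). *)

Section Games.
Variables (R : realType) (n : nat).

Definition game := {ffun {set 'I_n} -> R}.
Definition payoff := {ffun 'I_n -> R}.

Definition in_core (v : game) (x : payoff) : Prop :=
  (forall S : {set 'I_n}, v S <= \sum_(i in S) x i) /\
  \sum_(i in [set: 'I_n]) x i = v [set: 'I_n].

Definition core_singleton (v : game) : Prop :=
  exists x : payoff, forall y : payoff, in_core v y <-> y = x.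

(* The polytope BG_+(n): v(empty)=0, v >= 0, v(N) = 1, nonempty core.
   (Coordinates on empty set and N are fixed, so this is identified with the
   polytope in R^{2^N \ {empty, N}}.) *)
Definition inBG (v : game) : Prop :=
  v set0 = 0 /\ v [set: 'I_n] = 1 /\ (forall S, 0 <= v S) /\
  exists x, in_core v x.

Definition comb (mu : R) (x y : game) : game :=
  [ffun S => mu * x S + (1 - mu) * y S].

Definition is_vertex (v : game) : Prop :=
  inBG v /\
  forall (x y : game) (mu : R), inBG x -> inBG y -> 0 < mu < 1 ->
    v = comb mu x y -> x = v /\ y = v.

Definition segment (v1 v2 : game) (w : game) : Prop :=
  exists mu : R, 0 <= mu <= 1 /\ w = comb mu v1 v2.

(* v1, v2 adjacent: distinct vertices such that the segment [v1,v2]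
   is a face (an edge) of the polytope. *)
Definition adjacent (v1 v2 : game) : Prop :=
  is_vertex v1 /\ is_vertex v2 /\ v1 <> v2 /\
  forall (x y : game) (mu : R), inBG x -> inBG y -> 0 < mu < 1 ->
    segment v1 v2 (comb mu x y) -> segment v1 v2 x /\ segment v1 v2 y.

Definition coll (v : game) : {set {set 'I_n}} :=
  [set S : {set 'I_n} | (S != set0) && (S != [set: 'I_n]) && (v S == 1)].

Definition coll_cap (v : game) : {set 'I_n} := \bigcap_(S in coll v) S.

End Games.

From HB Require Import structures.
From mathcomp Require Import all_boot all_order all_algebra.
From mathcomp Require Import reals.
From mathcomp Require Import lra.
Import Order.TTheory GRing.Theory Num.Theory.
Local Open Scope ring_scope.
Set Implicit Arguments. Unset Strict Implicit.

(* A vertex of BG_+(n) whose collection has intersection {i} is a 0-1 game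
   with core {e_i}: a core payoff vanishes off i because every k <> i misses
   some coalition of worth 1, and a coalition with 0 < v(S) < 1 could be moved
   up and down, contradicting extremality.  On the edge between two such
   vertices, v = lam v1 + (1 - lam) v2 has lam e_i + (1 - lam) e_j in its core.
   If a core payoff gave something to a third player k, shifting a little
   payoff from i to k, together with the worth of the coalitions where v1 or v2
   equals 1, would move v inside the polytope in a direction not parallel to
   v1 - v2, contradicting adjacency.  So core payoffs live on {i, j}, and a
   coalition of D1 avoiding j (resp. of D2 avoiding i) forces x_i >= lam
   (resp. x_j >= 1 - lam). *)

Section Games.
Variables (R : realType) (n : nat).
Implicit Types (v w d : game R n) (x y c : payoff R n) (S : {set 'I_n}) (i j k : 'I_n).

Definition basis_payoff i : payoff R n := [ffun m => (m == i)%:R].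

Definition shift v (e : R) d : game R n := [ffun S => v S + e * d S].

Definition comb_payoff (t : R) x y : payoff R n :=
  [ffun m => t * x m + (1 - t) * y m].

Lemma sum_indicator S i : \sum_(m in S) ((m == i)%:R : R) = (i \in S)%:R.
Proof.
case: (boolP (i \in S)) => iS.
  by rewrite (bigD1 i) //= eqxx big1 ?addr0 // => m /andP[_ /negbTE->].
by rewrite big1 // => m mS; case: eqP mS iS => // ->->.
Qed.

Lemma sum_basis_payoff S i : \sum_(m in S) basis_payoff i m = (i \in S)%:R.
Proof. by rewrite -sum_indicator; apply: eq_bigr => m _; rewrite ffunE. Qed.

Lemma sum_on_point y S i : i \in S ->
  (forall m, m \in S -> m != i -> y m = 0) -> \sum_(m in S) y m = y i.
Proof.
by move=> iS y0; rewrite (bigD1 i) //= big1 ?addr0 // => m /andP[]; apply: y0.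
Qed.

Lemma sum_on_pair y S i j : i \in S -> j \in S -> i != j ->
  (forall m, m \in S -> m != i -> m != j -> y m = 0) ->
  \sum_(m in S) y m = y i + y j.
Proof.
move=> iS jS ij y0; rewrite (bigD1 i) //= (bigD1 j) /=; last by rewrite jS eq_sym.
by rewrite big1 ?addr0 // => m /andP[/andP[]]; apply: y0.
Qed.

Lemma add_sum_notin_le x S k : k \notin S -> (forall m, 0 <= x m) ->
  x k + \sum_(m in S) x m <= \sum_(m in [set: 'I_n]) x m.
Proof.
move=> kS x0; rewrite -big_setU1 //= [leRHS](big_setID (k |: S)) /= setTI lerDl.
by apply: sumr_ge0 => m _.
Qed.

Lemma core_ge0 v x : (forall S, 0 <= v S) -> in_core v x -> forall m, 0 <= x m.
Proof.
move=> v0 [xS _] m; apply: le_trans (v0 [set m]) _.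
by move: (xS [set m]); rewrite big_set1.
Qed.

Lemma inBG_intro w c : w set0 = 0 -> w [set: 'I_n] = 1 -> (forall S, 0 <= w S) ->
  (forall S, w S <= \sum_(m in S) c m) -> \sum_(m in [set: 'I_n]) c m = 1 ->
  inBG w.
Proof. by move=> w0 w1 w_ge0 cS c1; do 3!split=> //; exists c; split; rewrite ?c1. Qed.

Lemma in_core_comb v1 v2 x y (t : R) : 0 <= t <= 1 ->
  in_core v1 x -> in_core v2 y -> in_core (comb t v1 v2) (comb_payoff t x y).
Proof.
move=> /andP[t0 t1] [xS xN] [yS yN].
have sumE S : \sum_(m in S) comb_payoff t x y m =
    t * \sum_(m in S) x m + (1 - t) * \sum_(m in S) y m.
  by rewrite !mulr_sumr -big_split; apply: eq_bigr => m _; rewrite ffunE.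
split=> [S|]; rewrite sumE ffunE; last by rewrite xN yN.
by apply: lerD; apply: ler_wpM2l; rewrite ?subr_ge0.
Qed.

Lemma comb_idem (t : R) w : comb t w w = w.
Proof. by apply/ffunP => S; rewrite ffunE; lra. Qed.

Lemma comb_shift_opp v (e : R) d : v = comb 2^-1 (shift v e d) (shift v (- e) d).
Proof. by apply/ffunP => S; rewrite !ffunE; lra. Qed.

Lemma vertex_shift_eq0 v (e : R) d : is_vertex v -> 0 < e ->
  inBG (shift v e d) -> inBG (shift v (- e) d) -> forall S, d S = 0.
Proof.
move=> [_ extreme] e0 vp vm S.
have half01 : (0 : R) < (2^-1 : R) < (1 : R) by apply/andP; split; lra.
have [/(congr1 (fun w : game R n => w S)) + _] :=
  extreme _ _ _ vp vm half01 (comb_shift_opp v e d).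
by rewrite ffunE => /eqP; rewrite -subr_eq0 addrC addKr mulf_eq0 gt_eqF //= => /eqP.
Qed.

Lemma adjacent_shift_parallel v1 v2 (lam e : R) d : adjacent v1 v2 ->
  0 < lam < 1 -> 0 < e ->
  inBG (shift (comb lam v1 v2) e d) -> inBG (shift (comb lam v1 v2) (- e) d) ->
  exists b : R, forall S, e * d S = b * (v1 S - v2 S).
Proof.
move=> [_ [_ [_ edge]]] /andP[lam0 lam1] e0 vp vm.
have half01 : (0 : R) < (2^-1 : R) < (1 : R) by apply/andP; split; lra.
have on_edge : segment v1 v2 (comb 2^-1 (shift (comb lam v1 v2) e d)
                                        (shift (comb lam v1 v2) (- e) d)).
  by rewrite -comb_shift_opp; exists lam; split=> //; apply/andP; split; lra.
have [[mu [_ vpE]] _] := edge _ _ _ vp vm half01 on_edge.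
exists (mu - lam) => S; move/(congr1 (fun w : game R n => w S)): vpE.
by rewrite !ffunE => vpS; lra.
Qed.

Lemma coll_eq1 v S : S \in coll v -> v S = 1.
Proof. by rewrite inE => /andP[_ /eqP]. Qed.

Lemma mem_coll_cap v S i : coll_cap v = [set i] -> S \in coll v -> i \in S.
Proof. by move=> capE; move: S; apply/bigcapP; rewrite -/(coll_cap v) capE set11. Qed.

Lemma coll_cap_avoid v i k : coll_cap v = [set i] -> k != i ->
  exists2 S, S \in coll v & k \notin S.
Proof.
move=> capE ki; apply/exists_inP; apply: contraR ki => /exists_inPn kD.
by rewrite -in_set1 -capE; apply/bigcapP => S /kD; rewrite negbK.
Qed.

Section Vertex.
Variables (v : game R n) (i : 'I_n).
Hypotheses (v_vertex : is_vertex v) (v_cap : coll_cap v = [set i]).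

Lemma vertex_core_basis x : in_core v x -> x = basis_payoff i.
Proof.
have [[_ [vN [v0 _]]] _] := v_vertex.
move=> xC; have x0 := core_ge0 v0 xC.
have x_off k : k != i -> x k = 0.
  move=> ki; have [S SD kS] := coll_cap_avoid v_cap ki.
  have := add_sum_notin_le kS x0; have := xC.1 S.
  by rewrite coll_eq1 // xC.2 vN; have := x0 k; lra.
have xi : x i = 1.
  by rewrite -vN -xC.2 (sum_on_point (i := i)) ?in_setT // => m _; apply: x_off.
by apply/ffunP => m; rewrite ffunE; case: eqVneq => [->|/x_off->].
Qed.

Lemma vertex_in_core : in_core v (basis_payoff i).
Proof. by have [[_ [_ [_ [x xC]]]] _] := v_vertex; rewrite -(vertex_core_basis xC). Qed.

Lemma vertex_le_indicator S : v S <= (i \in S)%:R.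
Proof. by rewrite -sum_basis_payoff; apply: vertex_in_core.1. Qed.

Lemma vertex_eq01 S : v S = 0 \/ v S = 1.
Proof.
have [[v_set0 [vN [v0 _]]] _] := v_vertex.
have [->|vS0] := eqVneq (v S) 0; first by left.
have [->|vS1] := eqVneq (v S) 1; first by right.
have vS_gt0 : 0 < v S by rewrite lt_neqAle eq_sym vS0 v0.
have iS : i \in S.
  apply: contraTT vS_gt0 => /negbTE iS; rewrite -leNgt.
  by have := vertex_le_indicator S; rewrite iS.
have vS_lt1 : v S < 1 by rewrite lt_neqAle vS1; have := vertex_le_indicator S; rewrite iS.
have S0 : S != set0 by apply: contra_neq vS0 => ->.
have SN : S != [set: 'I_n] by apply: contra_neq vS1 => ->.
pose d : game R n := [ffun T => (T == S)%:R].
pose e := Num.min (v S) (1 - v S).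
have e0 : 0 < e by rewrite lt_min vS_gt0 subr_gt0.
have [e_le e_le'] : e <= v S /\ e <= 1 - v S by rewrite !ge_min !lexx orbT.
have shift_inBG f : -e <= f <= e -> inBG (shift v f d).
  move=> /andP[fl fr]; apply: (inBG_intro (c := basis_payoff i)).
  - by rewrite !ffunE eq_sym (negbTE S0) mulr0 addr0.
  - by rewrite !ffunE eq_sym (negbTE SN) mulr0 addr0.
  - move=> T; rewrite !ffunE; case: eqVneq => [->|_]; last by rewrite mulr0 addr0.
    by rewrite mulr1; lra.
  - move=> T; rewrite !ffunE; case: eqVneq => [->|_].
      by rewrite sum_basis_payoff iS mulr1 /= mulr1n; lra.
    by rewrite mulr0 addr0; apply: vertex_in_core.1.
  - by rewrite sum_basis_payoff in_setT.
have [e_in me_in] : -e <= e <= e /\ -e <= -e <= e by split; apply/andP; split; lra.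
have := vertex_shift_eq0 v_vertex e0 (shift_inBG e e_in) (shift_inBG (- e) me_in) S.
by rewrite ffunE eqxx /= mulr1n => /eqP; rewrite oner_eq0.
Qed.

End Vertex.

Section Edge.
Variables (v1 v2 : game R n) (i j : 'I_n) (lam : R).
Hypotheses (v12_adj : adjacent v1 v2) (v1_cap : coll_cap v1 = [set i])
  (v2_cap : coll_cap v2 = [set j]) (lam01 : 0 < lam < 1).

Local Notation v := (comb lam v1 v2).

Let v1_vertex : is_vertex v1. Proof. by case: v12_adj. Qed.
Let v2_vertex : is_vertex v2. Proof. by case: v12_adj => _ []. Qed.
Let v1_ge0 S : 0 <= v1 S. Proof. by have [[_ [_ [+ _]]] _] := v1_vertex; apply. Qed.
Let v2_ge0 S : 0 <= v2 S. Proof. by have [[_ [_ [+ _]]] _] := v2_vertex; apply. Qed.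

Definition edge_payoff := comb_payoff lam (basis_payoff i) (basis_payoff j).

Lemma edge_in_core : in_core v edge_payoff.
Proof.
apply: in_core_comb (vertex_in_core v1_vertex v1_cap) (vertex_in_core v2_vertex v2_cap).
by case/andP: lam01 => *; apply/andP; split; lra.
Qed.

Lemma edge_set0 : v set0 = 0.
Proof.
have [[v1_0 _] _] := v1_vertex; have [[v2_0 _] _] := v2_vertex.
by rewrite ffunE v1_0 v2_0; lra.
Qed.

Lemma edge_setT : v [set: 'I_n] = 1.
Proof.
have [[_ [v1N _]] _] := v1_vertex; have [[_ [v2N _]] _] := v2_vertex.
by rewrite ffunE v1N v2N; lra.
Qed.

Lemma edge_ge0 S : 0 <= v S.
Proof.
have /andP[lam_gt0 lam_lt1] := lam01.
by rewrite ffunE addr_ge0 // mulr_ge0 // ?subr_ge0 ltW.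
Qed.

(* Moving payoff f from i to k changes the worth of S by f ((k \in S) - (i \in S));
   coalitions of worth 0 are left alone, as their worth cannot decrease. *)
Definition transfer k : game R n :=
  [ffun S => if (v1 S == 1) || (v2 S == 1) then (k \in S)%:R - (i \in S)%:R else 0].

Lemma transfer_inBG c k f : in_core v c -> k != i ->
  `|f| <= Num.min lam (1 - lam) -> f <= c i -> - f <= c k ->
  inBG (shift v f (transfer k)).
Proof.
move=> cC ki; rewrite le_min !ler_norml => /andP[/andP[fl1 fr1] /andP[fl2 fr2]] fi fk.
have c_ge0 := core_ge0 edge_ge0 cC.
have transfer0 S : (k \in S) = (i \in S) -> transfer k S = 0.
  by move=> kiS; rewrite ffunE kiS subrr if_same.
pose c' : payoff R n := [ffun m => c m + f * ((m == k)%:R - (m == i)%:R)].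
have sum_c' S :
    \sum_(m in S) c' m = \sum_(m in S) c m + f * ((k \in S)%:R - (i \in S)%:R).
  rewrite -!sum_indicator -sumrB mulr_sumr -big_split /=.
  by apply: eq_bigr => m _; rewrite ffunE.
have c'_ge0 m : 0 <= c' m.
  rewrite ffunE; case: (eqVneq m k) => [->|mk].
    by rewrite (negbTE ki) /= mulr1n mulr0n; have := c_ge0 k; lra.
  case: (eqVneq m i) => [->|mi] /=; last by rewrite mulr0n subrr mulr0 addr0.
  by rewrite mulr1n mulr0n; lra.
apply: (inBG_intro (c := c')).
- by rewrite ffunE transfer0 ?in_set0 // mulr0 addr0 edge_set0.
- by rewrite ffunE transfer0 ?in_setT // mulr0 addr0 edge_setT.
- move=> S; rewrite !ffunE.
  case: (vertex_eq01 v1_vertex v1_cap S) => ->;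
  case: (vertex_eq01 v2_vertex v2_cap S) => -> /=; rewrite ?eqxx ?(eq_sym 0) ?oner_eq0 /=;
  case: (k \in S); case: (i \in S); rewrite /= ?mulr0n ?mulr1n; lra.
- move=> S; rewrite sum_c' ffunE [transfer k S]ffunE.
  case: ifP => [_|v12S]; first by rewrite lerD2r; apply: cC.1.
  rewrite mulr0 addr0 -sum_c' [v S]ffunE.
  apply: le_trans (sumr_ge0 _ (fun m _ => c'_ge0 m)).
  move: v12S; case: (vertex_eq01 v1_vertex v1_cap S) => ->;
  case: (vertex_eq01 v2_vertex v2_cap S) => ->; rewrite ?eqxx ?orbT //= => _; lra.
- by rewrite sum_c' !in_setT subrr mulr0 addr0 cC.2 edge_setT.
Qed.

Lemma transfer_not_parallel k (e b : R) : k != i -> k != j -> 0 < e ->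
  ~ (forall S, e * transfer k S = b * (v1 S - v2 S)).
Proof.
move=> ki kj e0 par.
have [S1 S1D kS1] := coll_cap_avoid v1_cap ki.
have [S2 S2D kS2] := coll_cap_avoid v2_cap kj.
have := par S1; have := par S2; rewrite !ffunE (coll_eq1 S1D) (coll_eq1 S2D).
rewrite eqxx orbT /= (negbTE kS1) (negbTE kS2) (mem_coll_cap v1_cap S1D) /=.
have := vertex_le_indicator v1_vertex v1_cap S2.
case: (vertex_eq01 v2_vertex v2_cap S1) => ->;
case: (vertex_eq01 v1_vertex v1_cap S2) => ->;
case: (i \in S2); rewrite /= ?mulr0n ?mulr1n; lra.
Qed.

Lemma edge_core_off y k : in_core v y -> k != i -> k != j -> y k = 0.
Proof.
move=> yC ki kj; apply/eqP; rewrite eq_le (core_ge0 edge_ge0 yC) andbT leNgt.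
apply/negP => yk_gt0; have /andP[lam_gt0 lam_lt1] := lam01.
have y_ge0 := core_ge0 edge_ge0 yC.
pose c := comb_payoff 2^-1 edge_payoff y.
have cC : in_core v c.
  have half01 : (0 : R) <= (2^-1 : R) <= (1 : R) by apply/andP; split; lra.
  by have := in_core_comb half01 edge_in_core yC; rewrite comb_idem.
have ci_gt0 : 0 < c i.
  rewrite !ffunE eqxx /= mulr1n; have := y_ge0 i.
  by case: (i == j); rewrite /= ?mulr1n ?mulr0n; lra.
have ck_gt0 : 0 < c k by rewrite !ffunE (negbTE ki) (negbTE kj) /= mulr0n; lra.
pose e := Num.min (Num.min lam (1 - lam)) (Num.min (c i) (c k)).
have e_gt0 : 0 < e by rewrite !lt_min lam_gt0 subr_gt0 lam_lt1 ci_gt0 ck_gt0.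
have := lexx e; rewrite {2}/e le_min => /andP[e_lam]; rewrite le_min => /andP[e_ci e_ck].
have [e_norm me_norm] : `|e| = e /\ `|- e| = e by rewrite normrN gtr0_norm.
have inBG_pos : inBG (shift v e (transfer k)).
  by apply: (transfer_inBG cC ki); rewrite ?e_norm //; lra.
have inBG_neg : inBG (shift v (- e) (transfer k)).
  by apply: (transfer_inBG cC ki); rewrite ?me_norm //; lra.
have [b] := adjacent_shift_parallel v12_adj lam01 e_gt0 inBG_pos inBG_neg.
exact: transfer_not_parallel.
Qed.

Lemma edge_core_same y : i = j -> in_core v y -> y i = 1.
Proof.
move=> ij yC; rewrite -edge_setT -yC.2 (sum_on_point (i := i)) ?in_setT // => l _ li.
by apply: (edge_core_off yC li); rewrite -ij.
Qed.

Lemma edge_core_distinct y : i != j -> in_core v y -> y i = lam /\ y j = 1 - lam.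
Proof.
move=> ij yC; have /andP[lam_gt0 lam_lt1] := lam01.
have y_off k : k != i -> k != j -> y k = 0 by apply: edge_core_off.
have lam_le_yi : lam <= y i.
  have [|S SD jS] := coll_cap_avoid v1_cap (k := j); first by rewrite eq_sym.
  have yS : \sum_(l in S) y l = y i.
    apply: sum_on_point (mem_coll_cap v1_cap SD) _ => l lS li.
    by apply: (y_off _ li); apply: contraNneq _ jS => <-.
  have := yC.1 S; rewrite yS ffunE (coll_eq1 SD).
  have : 0 <= (1 - lam) * v2 S by rewrite mulr_ge0 ?v2_ge0 // subr_ge0 ltW.
  lra.
have lam_le_yj : 1 - lam <= y j.
  have [S SD iS] := coll_cap_avoid v2_cap ij.
  have yS : \sum_(l in S) y l = y j.
    apply: sum_on_point (mem_coll_cap v2_cap SD) _ => l lS lj.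
    by apply: (y_off _ _ lj); apply: contraNneq _ iS => <-.
  have := yC.1 S; rewrite yS ffunE (coll_eq1 SD).
  have : 0 <= lam * v1 S by rewrite mulr_ge0 ?v1_ge0 // ltW.
  lra.
have : y i + y j = 1.
  rewrite -edge_setT -yC.2 (sum_on_pair (i := i) (j := j)) ?in_setT //.
  by move=> l _; apply: y_off.
lra.
Qed.

Lemma edge_core_singleton : core_singleton v.
Proof.
exists edge_payoff => y; split=> [yC|->]; last exact: edge_in_core.
apply/ffunP => m; rewrite !ffunE.
have [ij|ij] := eqVneq i j.
  rewrite -ij; have [->|mi] := eqVneq m i.
    by rewrite edge_core_same //= mulr1n; lra.
  by rewrite (edge_core_off yC) // -?ij //= mulr0n; lra.
have [yi yj] := edge_core_distinct ij yC.
have [->|mi] := eqVneq m i; first by rewrite (negbTE ij) /= mulr1n mulr0n yi; lra.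
have [->|mj] := eqVneq m j; first by rewrite /= mulr0n mulr1n yj; lra.
by rewrite (edge_core_off yC) //= !mulr0n; lra.
Qed.

End Edge.

End Games.

Theorem theorem20 (R : realType) (n : nat) (v1 v2 : game R n) (i j : 'I_n)
  (lam : R) :
  adjacent v1 v2 ->
  coll_cap v1 = [set i] -> coll_cap v2 = [set j] ->
  0 < lam < 1 ->
  (i = j -> core_singleton (comb lam v1 v2)) /\
  (i <> j -> (n <= 4)%N -> core_singleton (comb lam v1 v2)).
Proof.
move=> v12_adj v1_cap v2_cap lam01.
by split=> [_|_ _]; apply: edge_core_singleton v12_adj v1_cap v2_cap lam01.
Qed.
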